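(* Let $a_{\inf},a_{\sup},b_{\inf},b_{\sup},\chi,\mu$ be positive constants with $a_{\inf}\le a_{\sup}$, $b_{\inf}\le b_{\sup}$, and suppose $b_{\inf}>\big(1+\frac{a_{\sup}}{a_{\inf}}\big)\chi\mu$. Define sequences by $\underline{M}_0=0$ and, for $n\ge0$, $$\overline{M}_n=\frac{a_{\sup}-\chi\mu\underline{M}_n}{b_{\inf}-\chi\mu},\qquad \underline{M}_{n+1}=\frac{a_{\inf}-\chi\mu\overline{M}_n}{b_{\sup}-\chi\mu}.$$ Then for every $n\ge0$, $\underline{M}_{n+1}>\underline{M}_n\ge0$ and $\overline{M}_n>\overline{M}_{n+1}>0$, and $\lim_{n\to\infty}(\underline{M}_n,\overline{M}_n)=(\underline{M},\overline{M})$, where $$\underline{M}:=\frac{(b_{\inf}-\chi\mu)a_{\inf}-\chi\mu a_{\sup}}{(b_{\sup}-\chi\mu)(b_{\inf}-\chi\mu)-(\chi\mu)^2},\qquad \overline{M}:=\frac{(b_{\sup}-\chi\mu)a_{\sup}-\chi\mu a_{\inf}}{(b_{\sup}-\chi\mu)(b_{\inf}-\chi\mu)-(\chi\mu)^2}.$$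
   Context: In the paper, $a_{\inf},a_{\sup}$ (resp. $b_{\inf},b_{\sup}$) are the infimum and supremum over $(x,t)\in\mathbb{R}^N\times\mathbb{R}$ of positive bounded functions $a(x,t)$ (resp. $b(x,t)$). *)

From Stdlib Require Import Reals.
Open Scope R_scope.

Fixpoint Mlow (ainf asup binf bsup chi mu : R) (n : nat) : R :=
  match n with
  | O => 0
  | S k => (ainf - chi * mu *
             ((asup - chi * mu * Mlow ainf asup binf bsup chi mu k) / (binf - chi * mu)))
           / (bsup - chi * mu)
  end.

Definition Mup (ainf asup binf bsup chi mu : R) (n : nat) : R :=
  (asup - chi * mu * Mlow ainf asup binf bsup chi mu n) / (binf - chi * mu).

(* Eliminating [Mup], the lower bounds obey the affine recursion
   [Mlow (n+1) = p + k * Mlow n], where, with [c = chi mu],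
   [p = ((binf - c) ainf - c asup) / ((binf - c)(bsup - c))] and [k = c^2 / ((binf - c)(bsup - c))].
   The hypothesis on [binf] says exactly that [p > 0], and it forces [c < binf - c <= bsup - c],
   so [0 < k < 1].  Hence [Mlow n = L (1 - k^n)] increases to the fixed point [L = p / (1 - k)],
   and [Mup n], a decreasing affine function of [Mlow n], decreases to its value at [L],
   which is positive. *)

From Stdlib Require Import Reals Lra.
Open Scope R_scope.

Lemma Un_cv_const (l : R) : Un_cv (fun _ => l) l.
Proof.
  intros eps Heps; exists 0%nat; intros n _.
  unfold R_dist; rewrite Rminus_diag, Rabs_R0; exact Heps.
Qed.

Lemma Un_cv_ext (u v : nat -> R) (l : R) :
  (forall n, u n = v n) -> Un_cv v l -> Un_cv u l.
Proof.
  intros Huv Hv eps Heps; destruct (Hv eps Heps) as [N HN].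
  exists N; intros n Hn; rewrite Huv; exact (HN n Hn).
Qed.

Lemma Un_cv_pow_0 (k : R) : Rabs k < 1 -> Un_cv (pow k) 0.
Proof.
  intros Hk eps Heps; destruct (pow_lt_1_zero k Hk eps Heps) as [N HN].
  exists N; intros n Hn; unfold R_dist; rewrite Rminus_0_r; exact (HN n Hn).
Qed.

Lemma Un_cv_affine (u : nat -> R) (l a b : R) :
  Un_cv u l -> Un_cv (fun n => a - b * u n) (a - b * l).
Proof.
  intros Hu; exact (CV_minus _ _ _ _ (Un_cv_const a) (CV_mult _ _ _ _ (Un_cv_const b) Hu)).
Qed.

Lemma Un_cv_div_r (u : nat -> R) (l d : R) :
  Un_cv u l -> Un_cv (fun n => u n / d) (l / d).
Proof.
  intros Hu; exact (CV_mult _ _ _ _ Hu (Un_cv_const (/ d))).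
Qed.

Section AffineIteration.

Variables (p k : R) (u : nat -> R).
Hypotheses (p_pos : 0 < p) (k_pos : 0 < k) (k_lt_1 : k < 1)
  (u_0 : u 0%nat = 0) (u_S : forall n, u (S n) = p + k * u n).

Lemma affine_iter_closed n : u n = p / (1 - k) - p / (1 - k) * k ^ n.
Proof.
  induction n as [|n IH]; rewrite ?u_S, ?IH, ?u_0; simpl; field; lra.
Qed.

Lemma affine_iter_increasing n : u n < u (S n).
Proof.
  rewrite !affine_iter_closed; simpl.
  assert (0 < p / (1 - k)) by (apply Rdiv_lt_0_compat; lra).
  assert (0 < k ^ n) by (apply pow_lt; lra).
  assert (0 < p / (1 - k) * k ^ n * (1 - k))
    by (apply Rmult_lt_0_compat; [apply Rmult_lt_0_compat|]; lra).
  lra.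
Qed.

Lemma affine_iter_nonneg n : 0 <= u n.
Proof.
  induction n as [|n IH]; [rewrite u_0; lra | rewrite u_S; nra].
Qed.

Lemma affine_iter_lt_fixpoint n : u n < p / (1 - k).
Proof.
  rewrite affine_iter_closed.
  assert (0 < p / (1 - k)) by (apply Rdiv_lt_0_compat; lra).
  assert (0 < k ^ n) by (apply pow_lt; lra).
  nra.
Qed.

Lemma affine_iter_cv : Un_cv u (p / (1 - k)).
Proof.
  apply (Un_cv_ext _ _ _ affine_iter_closed).
  replace (p / (1 - k)) with (p / (1 - k) - p / (1 - k) * 0) at 1 by ring.
  apply Un_cv_affine, Un_cv_pow_0.
  rewrite Rabs_pos_eq; lra.
Qed.

End AffineIteration.

Section BoundIteration.

Variables ainf asup binf bsup chi mu : R.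
Hypotheses (ainf_pos : 0 < ainf) (chi_mu_pos : 0 < chi * mu)
  (ainf_le_asup : ainf <= asup) (binf_le_bsup : binf <= bsup)
  (binf_large : (binf - chi * mu) * ainf > chi * mu * asup).

Local Notation c := (chi * mu).
Local Notation B1 := (binf - c).
Local Notation B2 := (bsup - c).
Local Notation Ml := (Mlow ainf asup binf bsup chi mu).
Local Notation Mu := (Mup ainf asup binf bsup chi mu).
Local Notation p := ((B1 * ainf - c * asup) / (B1 * B2)).
Local Notation k := (c ^ 2 / (B1 * B2)).
Local Notation Ml_lim := ((B1 * ainf - c * asup) / (B2 * B1 - c ^ 2)).
Local Notation Mu_lim := ((B2 * asup - c * ainf) / (B2 * B1 - c ^ 2)).

Lemma chi_mu_lt_binf_sub : c < B1.
Proof. nra. Qed.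

Lemma Mlow_S n : Ml (S n) = p + k * Ml n.
Proof.
  pose proof chi_mu_lt_binf_sub.
  simpl; field; lra.
Qed.

Lemma Mlow_step_pos : 0 < p.
Proof.
  pose proof chi_mu_lt_binf_sub.
  apply Rdiv_lt_0_compat; nra.
Qed.

Lemma Mlow_ratio_pos : 0 < k.
Proof.
  pose proof chi_mu_lt_binf_sub.
  apply Rdiv_lt_0_compat; nra.
Qed.

Lemma Mlow_ratio_lt_1 : k < 1.
Proof.
  pose proof chi_mu_lt_binf_sub.
  apply (Rmult_lt_reg_r (B1 * B2)); [nra|].
  unfold Rdiv; rewrite Rmult_assoc, Rinv_l by nra; nra.
Qed.

Lemma Mlow_fixpoint : p / (1 - k) = Ml_lim.
Proof.
  pose proof chi_mu_lt_binf_sub.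
  field; nra.
Qed.

Lemma Mlow_lt_lim n : Ml n < Ml_lim.
Proof.
  rewrite <- Mlow_fixpoint.
  exact (affine_iter_lt_fixpoint _ _ _ Mlow_step_pos Mlow_ratio_pos Mlow_ratio_lt_1
           (eq_refl 0) Mlow_S n).
Qed.

Lemma Mlow_increasing n : Ml n < Ml (S n).
Proof.
  exact (affine_iter_increasing _ _ _ Mlow_step_pos Mlow_ratio_pos Mlow_ratio_lt_1
           (eq_refl 0) Mlow_S n).
Qed.

Lemma Mlow_nonneg n : 0 <= Ml n.
Proof.
  exact (affine_iter_nonneg _ _ _ Mlow_step_pos Mlow_ratio_pos (eq_refl 0) Mlow_S n).
Qed.

Lemma Mlow_cv : Un_cv Ml Ml_lim.
Proof.
  rewrite <- Mlow_fixpoint.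
  exact (affine_iter_cv _ _ _ Mlow_ratio_pos Mlow_ratio_lt_1
           (eq_refl 0) Mlow_S).
Qed.

Lemma Mup_of_Mlow_antitone x y : x < y -> (asup - c * y) / B1 < (asup - c * x) / B1.
Proof.
  intros Hxy; pose proof chi_mu_lt_binf_sub.
  apply Rmult_lt_compat_r; [apply Rinv_0_lt_compat; lra | nra].
Qed.

Lemma Mup_lim_eq : (asup - c * Ml_lim) / B1 = Mu_lim.
Proof.
  pose proof chi_mu_lt_binf_sub.
  field; split; nra.
Qed.

Lemma Mup_lim_pos : 0 < Mu_lim.
Proof.
  pose proof chi_mu_lt_binf_sub.
  apply Rdiv_lt_0_compat; nra.
Qed.

Lemma Mup_decreasing n : Mu (S n) < Mu n.
Proof. exact (Mup_of_Mlow_antitone _ _ (Mlow_increasing n)). Qed.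

Lemma Mup_pos n : 0 < Mu n.
Proof.
  pose proof (Mup_of_Mlow_antitone _ _ (Mlow_lt_lim n)) as Hlim.
  rewrite Mup_lim_eq in Hlim; pose proof Mup_lim_pos.
  unfold Mup; lra.
Qed.

Lemma Mup_cv : Un_cv Mu Mu_lim.
Proof.
  rewrite <- Mup_lim_eq.
  exact (Un_cv_div_r _ _ _ (Un_cv_affine _ _ _ _ Mlow_cv)).
Qed.

End BoundIteration.

Theorem lemma3p4 (ainf asup binf bsup chi mu : R) :
  0 < ainf -> 0 < asup -> 0 < binf -> 0 < bsup -> 0 < chi -> 0 < mu ->
  ainf <= asup -> binf <= bsup ->
  binf > (1 + asup / ainf) * chi * mu ->
  (forall n : nat,
     Mlow ainf asup binf bsup chi mu (S n) > Mlow ainf asup binf bsup chi mu n /\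
     Mlow ainf asup binf bsup chi mu n >= 0 /\
     Mup ainf asup binf bsup chi mu n > Mup ainf asup binf bsup chi mu (S n) /\
     Mup ainf asup binf bsup chi mu (S n) > 0) /\
  Un_cv (Mlow ainf asup binf bsup chi mu)
    (((binf - chi * mu) * ainf - chi * mu * asup) /
     ((bsup - chi * mu) * (binf - chi * mu) - (chi * mu) ^ 2)) /\
  Un_cv (Mup ainf asup binf bsup chi mu)
    (((bsup - chi * mu) * asup - chi * mu * ainf) /
     ((bsup - chi * mu) * (binf - chi * mu) - (chi * mu) ^ 2)).
Proof.
  intros ainf_pos _ _ _ chi_pos mu_pos ainf_le_asup binf_le_bsup binf_gt.
  assert (chi_mu_pos : 0 < chi * mu) by (apply Rmult_lt_0_compat; assumption).
  assert (binf_large : (binf - chi * mu) * ainf > chi * mu * asup).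
  { assert (Hdiv : (1 + asup / ainf) * chi * mu * ainf = chi * mu * (ainf + asup))
      by (field; lra).
    nra. }
  split; [intros n; split; [|split; [|split]] | split].
  - apply Mlow_increasing; assumption.
  - apply Rle_ge, Mlow_nonneg; assumption.
  - apply Mup_decreasing; assumption.
  - apply Mup_pos; assumption.
  - apply Mlow_cv; assumption.
  - apply Mup_cv; assumption.
Qed.
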